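(* Let $G_{\mathrm{vc}}=(V_{\mathrm{vc}},E_{\mathrm{vc}})$ be a vertex-capacitated graph with node-weighting $A_{\mathrm{vc}}$, and let $G_{\mathrm{ec}}=(V_{\mathrm{ec}},E_{\mathrm{ec}})$ be the corresponding directed edge-capacitated graph with node-weighting $A_{\mathrm{ec}}$. Then for all $h,s,\phi$: (1) If $A_{\mathrm{vc}}$ is $(h,s)$-length $\phi$-expanding in $G_{\mathrm{vc}}$, then $A_{\mathrm{ec}}$ is $(h,s)$-length $\phi$-expanding in $G_{\mathrm{ec}}$. (2) If $A_{\mathrm{ec}}$ is $(h,s)$-length $\phi$-expanding in $G_{\mathrm{ec}}$, then $A_{\mathrm{vc}}$ is $(h,s)$-length $\frac{\phi}{3}$-expanding in $G_{\mathrm{vc}}$.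
   Context: Vertex-capacitated graph: finite undirected graph with positive integer lengths $\ell$ and capacities $u$ on vertices and edges; path length sums vertex and edge lengths. Corresponding directed graph: for each $v\in V_{\mathrm{vc}}$, add vertices $v_{\mathrm{in}},v_{\mathrm{mid}},v_{\mathrm{out}}$ and directed edges $(v_{\mathrm{in}},v_{\mathrm{mid}}),(v_{\mathrm{mid}},v_{\mathrm{out}}),(v_{\mathrm{in}},v_{\mathrm{out}})$, each with length $\ell(v)$ and capacity $u(v)$; for each edge $e=\{u,v\}\in E_{\mathrm{vc}}$ add directed edges $(u_{\mathrm{out}},v_{\mathrm{in}})$ and $(v_{\mathrm{out}},u_{\mathrm{in}})$ with length $\ell(e)$ and capacity $u(e)$; set $A_{\mathrm{ec}}(v_{\mathrm{mid}})=A_{\mathrm{vc}}(v)$ and $A_{\mathrm{ec}}=0$ on all other vertices. General notions: node-weighting $A\ge0$; demand $D:V\times V\to\mathbb{R}_{\ge0}$; $A$-respecting: $\max\{\sum_wD(v,w),\sum_wD(w,v)\}\le A(v)$; $h$-length: $D(v,w)>0\Rightarrow\mathrm{dist}(v,w)\le h$; symmetric: $D(v,w)=D(w,v)$. An $H$-length moving cut assigns to each edge (and, in a vertex-capacitated graph, also each vertex) $x$ a value $C(x)\in\{0,\tfrac1H,\dots\}\cap[0,1]$; $|C|=\sum_xu(x)C(x)$; $G-C$ has lengths $\ell(x)+H\cdot C(x)$; $\mathrm{sep}_{h'}(C,D)=\sum_{(u,v):\mathrm{dist}_{G-C}(u,v)>h'}D(u,v)$; $\mathrm{spars}_{h'}(C,D)=|C|/\mathrm{sep}_{h'}(C,D)$.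 For an $hs$-length moving cut $C$, $\mathrm{spars}_{(h,s)}(C,A)=\min\mathrm{spars}_{hs}(C,D)$ over $A$-respecting $h$-length demands $D$ — required to be symmetric in the directed graph $G_{\mathrm{ec}}$, arbitrary in $G_{\mathrm{vc}}$ (zero separation counts as $+\infty$). $A$ is $(h,s)$-length $\phi$-expanding if $\mathrm{spars}_{(h,s)}(C,A)\ge\phi$ for every $hs$-length moving cut $C$. *)

From HB Require Import structures.
From mathcomp Require Import all_boot all_order all_algebra.
From mathcomp Require Import boolp.
Set Implicit Arguments. Unset Strict Implicit. Unset Printing Implicit Defensive.
Import Order.TTheory GRing.Theory Num.Theory.
Local Open Scope ring_scope.

Section Generic.
Variable R : realFieldType.

Definition is_moving_cut (X : finType) (H : nat) (C : X -> R) : Prop :=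
  forall x, exists k : nat, (k <= H)%N /\ C x = k%:R / H%:R.

Section Digraph.
Variables (X F : finType) (tl hd : F -> X) (len cap : F -> nat).

Fixpoint dwalk (x y : X) (p : seq F) : bool :=
  match p with
  | [::] => x == y
  | f :: p' => (tl f == x) && dwalk (hd f) y p'
  end.

Definition dpathlen (l : F -> R) (p : seq F) : R := \sum_(f <- p) l f.

(* dist_l(x,y) <= b  and  dist_l(x,y) > b  (dist = +oo if unreachable) *)
Definition ddist_le (l : F -> R) (x y : X) (b : R) : Prop :=
  exists p, dwalk x y p /\ dpathlen l p <= b.
Definition ddist_gt (l : F -> R) (x y : X) (b : R) : Prop :=
  forall p, dwalk x y p -> b < dpathlen l p.

Definition d_len (f : F) : R := (len f)%:R.
Definition d_cut_len (H : nat) (C : F -> R) (f : F) : R := (len f)%:R + H%:R * C f.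

Definition d_cut_size (C : F -> R) : R := \sum_(f : F) (cap f)%:R * C f.

Definition d_sep (H : nat) (C : F -> R) (h' : R) (D : X -> X -> R) : R :=
  \sum_(x : X) \sum_(y : X)
     (if `[< ddist_gt (d_cut_len H C) x y h' >] then D x y else 0).

Definition d_respecting (A : X -> R) (D : X -> X -> R) : Prop :=
  forall x, Num.max (\sum_(y : X) D x y) (\sum_(y : X) D y x) <= A x.

Definition d_hlength (h : nat) (D : X -> X -> R) : Prop :=
  forall x y, 0 < D x y -> ddist_le d_len x y h%:R.

Definition d_expanding (h s : nat) (phi : R) (A : X -> R) : Prop :=
  forall C : F -> R, is_moving_cut (h * s) C ->
  forall D : X -> X -> R,
    (forall x y, 0 <= D x y) ->
    (forall x y, D x y = D y x) ->
    d_respecting A D -> d_hlength h D ->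
    0 < d_sep (h * s) C (h * s)%:R D ->
    phi <= d_cut_size C / d_sep (h * s) C (h * s)%:R D.

End Digraph.

(* ends e = the two endpoints of e (unordered).                       *)
Section VCGraph.
Variables (V E : finType) (ends : E -> V * V)
          (lenV capV : V -> nat) (lenE capE : E -> nat).

Definition joins (e : E) (x y : V) : bool :=
  ((ends e).1 == x) && ((ends e).2 == y) || ((ends e).1 == y) && ((ends e).2 == x).

(* a walk from x to y: x, (e1,x1), ..., (ek,xk) with xk = y *)
Fixpoint vwalk (x y : V) (p : seq (E * V)) : bool :=
  match p with
  | [::] => x == y
  | st :: p' => joins st.1 x st.2 && vwalk st.2 y p'
  end.

Definition vpathlen (l : (V + E)%type -> R) (x : V) (p : seq (E * V)) : R :=
  l (inl x) + \sum_(st <- p) (l (inr st.1) + l (inl st.2)).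

(* convention dist(x,x) = 0 *)
Definition vdist_le (l : (V + E)%type -> R) (x y : V) (b : R) : Prop :=
  x = y \/ exists p, vwalk x y p /\ vpathlen l x p <= b.
Definition vdist_gt (l : (V + E)%type -> R) (x y : V) (b : R) : Prop :=
  x <> y /\ forall p, vwalk x y p -> b < vpathlen l x p.

Definition vc_len (z : (V + E)%type) : nat :=
  match z with inl v => lenV v | inr e => lenE e end.
Definition vc_cap (z : (V + E)%type) : nat :=
  match z with inl v => capV v | inr e => capE e end.

Definition v_len (z : (V + E)%type) : R := (vc_len z)%:R.
Definition v_cut_len (H : nat) (C : (V + E)%type -> R) (z : (V + E)%type) : R :=
  (vc_len z)%:R + H%:R * C z.

Definition v_cut_size (C : (V + E)%type -> R) : R :=
  \sum_(z : (V + E)%type) (vc_cap z)%:R * C z.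

Definition v_sep (H : nat) (C : (V + E)%type -> R) (h' : R) (D : V -> V -> R) : R :=
  \sum_(x : V) \sum_(y : V)
     (if `[< vdist_gt (v_cut_len H C) x y h' >] then D x y else 0).

Definition v_respecting (A : V -> R) (D : V -> V -> R) : Prop :=
  forall x, Num.max (\sum_(y : V) D x y) (\sum_(y : V) D y x) <= A x.

Definition v_hlength (h : nat) (D : V -> V -> R) : Prop :=
  forall x y, 0 < D x y -> vdist_le v_len x y h%:R.

Definition v_expanding (h s : nat) (phi : R) (A : V -> R) : Prop :=
  forall C : (V + E)%type -> R, is_moving_cut (h * s) C ->
  forall D : V -> V -> R,
    (forall x y, 0 <= D x y) ->
    v_respecting A D -> v_hlength h D ->
    0 < v_sep (h * s) C (h * s)%:R D ->
    phi <= v_cut_size C / v_sep (h * s) C (h * s)%:R D.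

(* vertex (v, 0) = v_in, (v, 1) = v_mid, (v, 2) = v_out *)
Definition k_in : 'I_3 := @Ordinal 3 0 isT.
Definition k_mid : 'I_3 := @Ordinal 3 1 isT.
Definition k_out : 'I_3 := @Ordinal 3 2 isT.

Definition ec_vertex := (V * 'I_3)%type.
(* arcs: inl (v,0) = (v_in,v_mid), inl (v,1) = (v_mid,v_out),
   inl (v,2) = (v_in,v_out); for e with ends (a,b):
   inr (e,false) = (a_out,b_in), inr (e,true) = (b_out,a_in). *)
Definition ec_arc := ((V * 'I_3) + (E * bool))%type.

Definition ec_tl (f : ec_arc) : ec_vertex :=
  match f with
  | inl (v, i) => if nat_of_ord i == 1%N then (v, k_mid) else (v, k_in)
  | inr (e, b) => if b then ((ends e).2, k_out) else ((ends e).1, k_out)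
  end.
Definition ec_hd (f : ec_arc) : ec_vertex :=
  match f with
  | inl (v, i) => if nat_of_ord i == 0%N then (v, k_mid) else (v, k_out)
  | inr (e, b) => if b then ((ends e).1, k_in) else ((ends e).2, k_in)
  end.
Definition ec_len (f : ec_arc) : nat :=
  match f with inl (v, _) => lenV v | inr (e, _) => lenE e end.
Definition ec_cap (f : ec_arc) : nat :=
  match f with inl (v, _) => capV v | inr (e, _) => capE e end.

Definition ec_A (A : V -> R) (x : ec_vertex) : R :=
  if x.2 == k_mid then A x.1 else 0.

Definition ec_expanding (h s : nat) (phi : R) (A : V -> R) : Prop :=
  d_expanding ec_tl ec_hd ec_len ec_cap h s phi (ec_A A).

End VCGraph.
End Generic.

(* A vertex-capacitated walk u -> w lifts to a directed walk u_mid -> w_mid of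
   the same length (entering each inner vertex at v_in and leaving at v_out), and
   every directed walk between mid copies projects back to a vertex-capacitated
   walk that is no longer, since each vertex it visits is crossed along one of
   its arcs.  So a cut C of G_ec is dominated by cutting every vertex or edge as
   much as its most-cut arc, which separates at least the same mid pairs at no
   larger cost; and a cut of G_vc copied onto all arcs above each vertex or edge
   separates the same pairs at most three times the cost.  Demands move between
   v and v_mid; as G_ec demands must be symmetric, a G_vc demand is replaced by
   its symmetrisation, which is separated just as much because vertex-capacitated
   distances are symmetric. *)

From mathcomp Require Import all_boot all_order all_algebra.
From mathcomp Require Import boolp ring lra.
Import Order.TTheory GRing.Theory Num.Theory.
Set Implicit Arguments. Unset Strict Implicit. Unset Printing Implicit Defensive.
Local Open Scope ring_scope.

Section Walks.
Variables (R : realFieldType) (V E : finType) (ends : E -> V * V).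

Local Notation ewalk := (dwalk (ec_tl ends) (ec_hd ends)).

Definition ec_lift (T : Type) (l : (V + E)%type -> T) (f : ec_arc V E) : T :=
  match f with inl (v, _) => l (inl v) | inr (e, _) => l (inr e) end.

Lemma joins_sym e x y : joins ends e x y = joins ends e y x.
Proof. by rewrite /joins orbC. Qed.

Lemma vwalk_cat x y z p q :
  vwalk ends x y p -> vwalk ends y z q -> vwalk ends x z (p ++ q).
Proof.
elim: p x => [|st p IH] x /=; first by move/eqP ->.
by case/andP => -> /IH.
Qed.

Lemma vpathlen_cons (l : (V + E)%type -> R) x st p :
  vpathlen l x (st :: p) = l (inl x) + l (inr st.1) + vpathlen l st.2 p.
Proof. by rewrite /vpathlen big_cons !addrA. Qed.

Lemma vpathlen_rcons (l : (V + E)%type -> R) x p st :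
  vpathlen l x (rcons p st) = vpathlen l x p + l (inr st.1) + l (inl st.2).
Proof. by rewrite /vpathlen -cats1 big_cat big_seq1 !addrA. Qed.

Lemma vwalk_rev (l : (V + E)%type -> R) x y p : vwalk ends x y p ->
  exists p', vwalk ends y x p' /\ vpathlen l y p' = vpathlen l x p.
Proof.
elim: p x => [|[e z] p IH] x /=; first by move/eqP ->; exists [::]; rewrite /= eqxx.
case/andP => xz /IH [p' [zy lp']]; exists (rcons p' (e, x)); split.
  by rewrite -cats1; apply: vwalk_cat zy _; rewrite /= joins_sym xz eqxx.
by rewrite vpathlen_rcons lp' vpathlen_cons /=; ring.
Qed.

Lemma vdist_le_sym (l : (V + E)%type -> R) x y b :
  vdist_le ends l x y b -> vdist_le ends l y x b.
Proof.
case=> [-> | [p [xy lp]]]; [by left | right].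
have [p' [yx lp']] := vwalk_rev l xy; by exists p'; rewrite lp'.
Qed.

Lemma vdist_gt_sym (l : (V + E)%type -> R) x y b :
  vdist_gt ends l x y b -> vdist_gt ends l y x b.
Proof.
case=> xy gt; split=> [yx | p /(vwalk_rev l) [p' [xy' <-]]]; first exact: xy.
exact: gt xy'.
Qed.

Lemma ec_edge_arc e x y : joins ends e x y ->
  exists b, ec_tl ends (inr (e, b)) = (x, k_out) /\ ec_hd ends (inr (e, b)) = (y, k_in).
Proof.
by case/orP => /andP[/eqP ex /eqP ey]; [exists false | exists true]; rewrite /= ex ey.
Qed.

Lemma dwalk_cons (X F : finType) (tl hd : F -> X) x y f q :
  dwalk tl hd x y (f :: q) = (tl f == x) && dwalk tl hd (hd f) y q.
Proof. by []. Qed.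

Lemma dpathlen_le (l1 l2 : ec_arc V E -> R) q :
  (forall f, l1 f <= l2 f) -> dpathlen l1 q <= dpathlen l2 q.
Proof. by move=> l12; apply: ler_sum => f _. Qed.

Lemma ewalk_in_of_vwalk (l : (V + E)%type -> R) x w p : vwalk ends x w p ->
  exists q, ewalk (x, k_in) (w, k_mid) q /\ dpathlen (ec_lift l) q = vpathlen l x p.
Proof.
elim: p x => [|[e y] p IH] x /=.
  move/eqP ->; exists [:: inl (w, k_in)].
  by rewrite /= !eqxx /dpathlen /vpathlen !big_seq1 big_nil addr0.
case/andP => /ec_edge_arc [b [tl_b hd_b]] /IH [q [yw lq]].
exists [:: inl (x, k_out), inr (e, b) & q]; split.
  by rewrite !dwalk_cons tl_b hd_b /= !eqxx.
by rewrite /dpathlen !big_cons -/(dpathlen _ q) lq vpathlen_cons addrA.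
Qed.

Lemma ewalk_of_vwalk (l : (V + E)%type -> R) v w p :
  (forall z, 0 <= l z) -> vwalk ends v w p ->
  exists q, ewalk (v, k_mid) (w, k_mid) q /\ dpathlen (ec_lift l) q <= vpathlen l v p.
Proof.
move=> l0; case: p => [|[e y] p] /=.
  by move/eqP ->; exists [::]; rewrite /= eqxx /dpathlen /vpathlen !big_nil addr0.
case/andP => /ec_edge_arc [b [tl_b hd_b]] /(ewalk_in_of_vwalk l) [q [yw lq]].
exists [:: inl (v, k_mid), inr (e, b) & q]; split.
  by rewrite !dwalk_cons tl_b hd_b /= !eqxx.
by rewrite /dpathlen !big_cons -/(dpathlen _ q) lq vpathlen_cons addrA.
Qed.

(* From [(v, k_in)] the walk has yet to cross [v]; from the other copies of [v]
   that crossing may already lie behind, whence the slack [l (inl v)]. *)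
Lemma vwalk_of_ewalk_to_mid (l : (V + E)%type -> R) w x q :
  (forall z, 0 <= l z) -> ewalk x (w, k_mid) q ->
  exists p, vwalk ends x.1 w p /\
    vpathlen l x.1 p <= dpathlen (ec_lift l) q + (if x.2 == k_in then 0 else l (inl x.1)).
Proof.
move=> l0; elim: q x => [|f q IH] x /=.
  move/eqP ->; exists [::]; rewrite /= eqxx /dpathlen /vpathlen !big_nil.
  by split => //; rewrite addr0 add0r.
case/andP => /eqP <- /IH [p [Wp Lp]]; rewrite /dpathlen big_cons -/(dpathlen _ q).
case: f Wp Lp => [[v [[|[|[|//]]] ?]]|[e []]] /= Wp Lp.
- by exists p; rewrite addr0 addrC.
- by exists p; split=> //; move: Lp (l0 (inl v)); lra.
- by exists p; rewrite addr0 addrC.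
- exists ((e, (ends e).1) :: p); rewrite /= Wp /joins !eqxx orbT vpathlen_cons /=.
  by split=> //; move: Lp; rewrite addr0; lra.
- exists ((e, (ends e).2) :: p); rewrite /= Wp /joins !eqxx vpathlen_cons /=.
  by split=> //; move: Lp; rewrite addr0; lra.
Qed.

Lemma vwalk_of_ewalk (l : (V + E)%type -> R) v w q :
  (forall z, 0 <= l z) -> ewalk (v, k_mid) (w, k_mid) q ->
  v = w \/ exists p, vwalk ends v w p /\ vpathlen l v p <= dpathlen (ec_lift l) q.
Proof.
move=> l0; case: q => [|f q]; first by move/eqP => [->]; left.
rewrite dwalk_cons => /andP[/eqP tl_f /(vwalk_of_ewalk_to_mid l0) [p [Wp Lp]]]; right.
case: f tl_f Wp Lp => [[v' [[|[|[|//]]] ?]]|[e []]] /= tl_f; try by case: tl_f.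
case: tl_f => -> Wp Lp; exists p; split=> //.
by rewrite /dpathlen big_cons addrC.
Qed.

Lemma vdist_gt_of_ddist_gt (l : (V + E)%type -> R) (lec : ec_arc V E -> R) v w b :
  (forall z, 0 <= l z) -> (forall f, lec f <= ec_lift l f) -> 0 <= b ->
  ddist_gt (ec_tl ends) (ec_hd ends) lec (v, k_mid) (w, k_mid) b ->
  vdist_gt ends l v w b.
Proof.
move=> l0 lec_le b0 gt; split=> [vw | p /(ewalk_of_vwalk l0) [q [Wq Lq]]].
  by move: (gt [::]); rewrite vw /= eqxx /dpathlen big_nil ltNge b0 => /(_ isT).
exact: lt_le_trans (gt q Wq) (le_trans (dpathlen_le q lec_le) Lq).
Qed.

Lemma ddist_gt_of_vdist_gt (l : (V + E)%type -> R) (lec : ec_arc V E -> R) v w b :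
  (forall z, 0 <= l z) -> (forall f, ec_lift l f <= lec f) ->
  vdist_gt ends l v w b ->
  ddist_gt (ec_tl ends) (ec_hd ends) lec (v, k_mid) (w, k_mid) b.
Proof.
move=> l0 lec_ge [vw gt] q /(vwalk_of_ewalk l0) [// | [p [Wp Lp]]].
exact: lt_le_trans (gt p Wp) (le_trans Lp (dpathlen_le q lec_ge)).
Qed.

Lemma vdist_le_of_ddist_le (l : (V + E)%type -> R) (lec : ec_arc V E -> R) v w b :
  (forall z, 0 <= l z) -> (forall f, ec_lift l f <= lec f) ->
  ddist_le (ec_tl ends) (ec_hd ends) lec (v, k_mid) (w, k_mid) b ->
  vdist_le ends l v w b.
Proof.
move=> l0 lec_ge [q [/(vwalk_of_ewalk l0) [-> | [p [Wp Lp]]] Lq]]; [by left | right].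
by exists p; split=> //; apply: le_trans Lp (le_trans (dpathlen_le q lec_ge) Lq).
Qed.

Lemma ddist_le_of_vdist_le (l : (V + E)%type -> R) (lec : ec_arc V E -> R) v w b :
  (forall z, 0 <= l z) -> (forall f, lec f <= ec_lift l f) -> 0 <= b ->
  vdist_le ends l v w b ->
  ddist_le (ec_tl ends) (ec_hd ends) lec (v, k_mid) (w, k_mid) b.
Proof.
move=> l0 lec_le b0 [-> | [p [/(ewalk_of_vwalk l0) [q [Wq Lq]] Lp]]].
  by exists [::]; rewrite /= eqxx /dpathlen big_nil.
by exists q; split=> //; apply: le_trans (dpathlen_le q lec_le) (le_trans Lq Lp).
Qed.

End Walks.

Section Sums.
Variable R : realFieldType.

Lemma sum_pair (I J : finType) (F : I * J -> R) :
  \sum_x F x = \sum_i \sum_j F (i, j).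
Proof. by rewrite pair_bigA; apply: eq_bigr => -[]. Qed.

Lemma ler_sum_term (I : finType) (F : I -> R) j :
  (forall i, 0 <= F i) -> F j <= \sum_i F i.
Proof. by move=> F0; rewrite (bigD1 j) //= lerDl sumr_ge0. Qed.

Lemma sum_ec_mid (V : finType) (F : ec_vertex V -> R) :
  (forall x, x.2 != k_mid -> F x = 0) -> \sum_x F x = \sum_v F (v, k_mid).
Proof.
move=> F0; rewrite sum_pair; apply: eq_bigr => v _.
by rewrite (bigD1 k_mid) //= big1 ?addr0 // => i; apply: (F0 (v, i)).
Qed.

Lemma ler_if_asbool (P Q : Prop) (a : R) : 0 <= a -> (P -> Q) ->
  (if `[< P >] then a else 0) <= (if `[< Q >] then a else 0).
Proof. by move=> a0 PQ; case: asboolP => [/PQ/asboolT -> | _] //; case: ifP. Qed.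

Lemma ler_ratio (a a' b b' : R) :
  0 <= a -> a <= a' -> 0 < b' -> b' <= b -> a / b <= a' / b'.
Proof.
move=> a0 aa' b'0 b'b; have b0 := lt_le_trans b'0 b'b.
by apply: ler_pM; rewrite ?invr_ge0 ?(ltW b0) // lef_pV2 ?posrE.
Qed.

Lemma moving_cut_ge0 (X : finType) H (C : X -> R) :
  is_moving_cut H C -> forall x, 0 <= C x.
Proof. by move=> HC x; have [k [_ ->]] := HC x; rewrite divr_ge0 ?ler0n. Qed.

Lemma d_cut_size_ge0 (F : finType) (cap : F -> nat) (C : F -> R) :
  (forall f, 0 <= C f) -> 0 <= d_cut_size cap C.
Proof. by move=> C0; apply: sumr_ge0 => f _; rewrite mulr_ge0. Qed.

Lemma d_cut_len_le (F : finType) (len : F -> nat) H (C C' : F -> R) f :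
  C f <= C' f -> d_cut_len len H C f <= d_cut_len len H C' f.
Proof. by move=> le_C; rewrite lerD2l ler_wpM2l. Qed.

End Sums.

Lemma ord3_cases (i : 'I_3) : [\/ i = k_in, i = k_mid | i = k_out].
Proof.
case: i => [[|[|[|//]]] ?]; [constructor 1 | constructor 2 | constructor 3];
  exact: val_inj.
Qed.

Section Transfer.
Variables (R : realFieldType) (V E : finType) (ends : E -> V * V).
Variables (lenV capV : V -> nat) (lenE capE : E -> nat).

Lemma d_cut_len_lift H (C : (V + E)%type -> R) f :
  d_cut_len (ec_len lenV lenE) H (ec_lift C) f = ec_lift (v_cut_len lenV lenE H C) f.
Proof. by case: f => -[]. Qed.

Lemma d_len_lift f : d_len R (ec_len lenV lenE) f = ec_lift (v_len R lenV lenE) f.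
Proof. by case: f => -[]. Qed.

Lemma v_cut_len_ge0 H (C : (V + E)%type -> R) :
  (forall z, 0 <= C z) -> forall z, 0 <= v_cut_len lenV lenE H C z.
Proof. by move=> C0 z; rewrite addr_ge0 ?mulr_ge0. Qed.

Lemma v_cut_size_ge0 (C : (V + E)%type -> R) :
  (forall z, 0 <= C z) -> 0 <= v_cut_size capV capE C.
Proof. by move=> C0; apply: sumr_ge0 => z _; rewrite mulr_ge0. Qed.

Lemma d_sep_mid (len : ec_arc V E -> nat) H C b (D : ec_vertex V -> ec_vertex V -> R) :
  (forall x y, (x.2 != k_mid) || (y.2 != k_mid) -> D x y = 0) ->
  d_sep (ec_tl ends) (ec_hd ends) len H C b D =
  \sum_v \sum_w (if `[< ddist_gt (ec_tl ends) (ec_hd ends) (d_cut_len len H C)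
                                 (v, k_mid) (w, k_mid) b >]
                 then D (v, k_mid) (w, k_mid) else 0).
Proof.
move=> D0; rewrite /d_sep sum_ec_mid => [|x x_nmid]; last first.
  by rewrite big1 // => y _; rewrite D0 ?x_nmid // if_same.
apply: eq_bigr => v _; rewrite sum_ec_mid // => y y_nmid.
by rewrite D0 ?y_nmid ?orbT // if_same.
Qed.

Lemma v_sep_symmetrize H C b (D : V -> V -> R) :
  v_sep ends lenV lenE H C b D =
  v_sep ends lenV lenE H C b (fun v w => (D v w + D w v) / 2).
Proof.
rewrite /v_sep; set g := fun v w => `[< vdist_gt ends (v_cut_len lenV lenE H C) v w b >].
have gC v w : g v w = g w v by rewrite /g; apply/asboolP/asboolP; apply: vdist_gt_sym.
pose a v w := if g v w then D v w else 0.
have -> : \sum_v \sum_w (if g v w then (D v w + D w v) / 2 else 0) =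
          (\sum_v \sum_w a v w + \sum_v \sum_w a w v) / 2.
  rewrite -big_split mulr_suml; apply: eq_bigr => v _.
  rewrite -big_split mulr_suml; apply: eq_bigr => w _.
  by rewrite /a [g w v]gC; case: (g v w); rewrite /= ?addr0 ?mul0r.
have -> : \sum_v \sum_w a w v = \sum_v \sum_w a v w by rewrite exchange_big.
by rewrite -[LHS]/(\sum_v \sum_w a v w); lra.
Qed.

Definition vc_cut (C : ec_arc V E -> R) (z : (V + E)%type) : R :=
  match z with
  | inl v => Num.max (C (inl (v, k_in))) (Num.max (C (inl (v, k_mid))) (C (inl (v, k_out))))
  | inr e => Num.max (C (inr (e, false))) (C (inr (e, true)))
  end.

Lemma vc_cut_moving H C : is_moving_cut H C -> is_moving_cut H (vc_cut C).
Proof.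
by move=> HC [v | e] /=; rewrite !maxEle; repeat case: ifP => _; apply: HC.
Qed.

Lemma le_lift_vc_cut C f : C f <= ec_lift (vc_cut C) f.
Proof.
case: f => [[v i] | [e []]] /=; rewrite !le_max ?lexx ?orbT //.
by case: (ord3_cases i) => ->; rewrite lexx ?orbT.
Qed.

Lemma vc_cut_ge0 C : (forall f, 0 <= C f) -> forall z, 0 <= vc_cut C z.
Proof.
move=> C0 [v | e].
  exact: le_trans (C0 _) (le_lift_vc_cut C (inl (v, k_in))).
exact: le_trans (C0 _) (le_lift_vc_cut C (inr (e, false))).
Qed.

Lemma v_cut_size_vc_cut C : (forall f, 0 <= C f) ->
  v_cut_size capV capE (vc_cut C) <= d_cut_size (ec_cap capV capE) C.
Proof.
move=> C0; rewrite /v_cut_size /d_cut_size !big_sumType !sum_pair /=.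
apply: lerD; [apply: ler_sum => v _ | apply: ler_sum => e _];
  rewrite -mulr_sumr ler_wpM2l ?ler0n // !ge_max.
  by rewrite !(ler_sum_term (F := fun i => C (inl (v, i)))).
by rewrite big_bool /= lerDl lerDr !C0.
Qed.

Lemma ec_A_respecting_mid (A : V -> R) (D : ec_vertex V -> ec_vertex V -> R) :
  (forall x y, 0 <= D x y) -> d_respecting (ec_A A) D ->
  forall x y, (x.2 != k_mid) || (y.2 != k_mid) -> D x y = 0.
Proof.
move=> D0 DA x y /orP[x_nmid | y_nmid]; apply/eqP; rewrite eq_le D0 andbT.
  have := DA x; rewrite /ec_A (negbTE x_nmid) ge_max => /andP[out0 _].
  exact: le_trans (ler_sum_term _ (D0 x)) out0.
have := DA y; rewrite /ec_A (negbTE y_nmid) ge_max => /andP[_ in0].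
exact: le_trans (ler_sum_term (F := fun x => D x y) _ (D0^~ y)) in0.
Qed.

Lemma v_respecting_mid (A : V -> R) (D : ec_vertex V -> ec_vertex V -> R) :
  (forall x y, 0 <= D x y) -> d_respecting (ec_A A) D ->
  v_respecting A (fun v w => D (v, k_mid) (w, k_mid)).
Proof.
move=> D0 DA v; have := DA (v, k_mid); rewrite /ec_A eqxx !ge_max sum_pair.
rewrite [\sum_y D y _]sum_pair => /andP[out_le in_le]; apply/andP; split.
  apply: le_trans out_le; apply: ler_sum => w _.
  exact: (ler_sum_term (F := fun i => D (v, k_mid) (w, i))).
apply: le_trans in_le; apply: ler_sum => w _.
exact: (ler_sum_term (F := fun i => D (w, i) (v, k_mid))).
Qed.

Lemma v_hlength_mid h (D : ec_vertex V -> ec_vertex V -> R) :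
  d_hlength (ec_tl ends) (ec_hd ends) (ec_len lenV lenE) h D ->
  v_hlength ends lenV lenE h (fun v w => D (v, k_mid) (w, k_mid)).
Proof.
move=> Dh v w /Dh; apply: vdist_le_of_ddist_le => [z | f]; first exact: ler0n.
by rewrite d_len_lift.
Qed.

Lemma d_sep_le_v_sep H C (D : ec_vertex V -> ec_vertex V -> R) :
  (forall f, 0 <= C f) -> (forall x y, 0 <= D x y) ->
  (forall x y, (x.2 != k_mid) || (y.2 != k_mid) -> D x y = 0) ->
  d_sep (ec_tl ends) (ec_hd ends) (ec_len lenV lenE) H C H%:R D <=
  v_sep ends lenV lenE H (vc_cut C) H%:R (fun v w => D (v, k_mid) (w, k_mid)).
Proof.
move=> C0 D0 Dmid; rewrite d_sep_mid //; apply: ler_sum => v _; apply: ler_sum => w _.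
apply: ler_if_asbool => //; apply: vdist_gt_of_ddist_gt; rewrite ?ler0n //.
  exact/v_cut_len_ge0/vc_cut_ge0.
by move=> f; rewrite -d_cut_len_lift; apply/d_cut_len_le/le_lift_vc_cut.
Qed.

Lemma ec_expanding_of_v_expanding (A : V -> R) h s phi :
  v_expanding ends lenV capV lenE capE h s phi A ->
  ec_expanding ends lenV capV lenE capE h s phi A.
Proof.
move=> expV C HC D D0 _ DA Dh sep_pos.
have C0 := moving_cut_ge0 HC.
have sep_le := d_sep_le_v_sep (h * s) C0 D0 (ec_A_respecting_mid D0 DA).
apply: le_trans (expV _ (vc_cut_moving HC) _ (fun v w => D0 (v, k_mid) (w, k_mid))
  (v_respecting_mid D0 DA) (v_hlength_mid Dh) (lt_le_trans sep_pos sep_le)) _.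
apply: ler_ratio sep_pos sep_le; last exact: v_cut_size_vc_cut.
exact/v_cut_size_ge0/vc_cut_ge0.
Qed.

Lemma ec_lift_moving H (C : (V + E)%type -> R) :
  is_moving_cut H C -> is_moving_cut H (ec_lift C).
Proof. by move=> HC [[v i] | [e b]]; apply: HC. Qed.

Lemma d_cut_size_lift (C : (V + E)%type -> R) : (forall z, 0 <= C z) ->
  d_cut_size (ec_cap capV capE) (ec_lift C) <= 3 * v_cut_size capV capE C.
Proof.
move=> C0; rewrite /d_cut_size /v_cut_size !big_sumType !sum_pair /= mulrDr !mulr_sumr.
apply: lerD; [apply: ler_sum => v _ | apply: ler_sum => e _].
  by rewrite sumr_const card_ord; lra.
rewrite big_bool /=; have := mulr_ge0 (ler0n R (capE e)) (C0 (inr e)); lra.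
Qed.

(* Halving the symmetrisation keeps the demand [ec_A A]-respecting. *)
Definition ec_demand (D : V -> V -> R) (x y : ec_vertex V) : R :=
  if (x.2 == k_mid) && (y.2 == k_mid) then (D x.1 y.1 + D y.1 x.1) / 2 else 0.

Lemma ec_demand_ge0 (D : V -> V -> R) :
  (forall v w, 0 <= D v w) -> forall x y, 0 <= ec_demand D x y.
Proof. by move=> D0 x y; rewrite /ec_demand; case: ifP; rewrite ?divr_ge0 ?addr_ge0. Qed.

Lemma ec_demandC (D : V -> V -> R) x y : ec_demand D x y = ec_demand D y x.
Proof. by rewrite /ec_demand andbC addrC. Qed.

Lemma ec_demand_nmid (D : V -> V -> R) x y :
  (x.2 != k_mid) || (y.2 != k_mid) -> ec_demand D x y = 0.
Proof. by rewrite /ec_demand -negb_and => /negbTE ->. Qed.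

Lemma ec_demand_respecting (A : V -> R) (D : V -> V -> R) :
  v_respecting A D -> d_respecting (ec_A A) (ec_demand D).
Proof.
move=> DA [v i]; rewrite /ec_A /=.
have [-> | i_nmid] := eqVneq i k_mid; last first.
  by rewrite !big1 ?maxxx // => y _; rewrite ec_demand_nmid // ?i_nmid ?orbT.
have row : \sum_y ec_demand D (v, k_mid) y = (\sum_w D v w + \sum_w D w v) / 2.
  rewrite sum_ec_mid => [|y y_nmid]; last by rewrite ec_demand_nmid ?y_nmid ?orbT.
  by rewrite -big_split mulr_suml; apply: eq_bigr => w _; rewrite /ec_demand /= ?eqxx.
under [X in Num.max _ X]eq_bigr do rewrite ec_demandC.
by rewrite row maxxx; have := DA v; rewrite ge_max => /andP[]; lra.
Qed.

Lemma ec_demand_hlength h (D : V -> V -> R) :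
  v_hlength ends lenV lenE h D ->
  d_hlength (ec_tl ends) (ec_hd ends) (ec_len lenV lenE) h (ec_demand D).
Proof.
move=> Dh [v i] [w j]; rewrite /ec_demand /=.
have [-> | _] := eqVneq i k_mid; last by rewrite ltxx.
have [-> | _] := eqVneq j k_mid; last by rewrite ltxx.
move=> Dpos; have vw : vdist_le ends (v_len R lenV lenE) v w h%:R.
  have [Dvw | Dwv] := ltP 0 (D v w); first exact: Dh.
  by apply/vdist_le_sym/Dh; move: Dpos => /=; lra.
by apply: ddist_le_of_vdist_le vw => [z | f |]; rewrite ?d_len_lift ?ler0n.
Qed.

Lemma v_sep_le_d_sep H (C : (V + E)%type -> R) (D : V -> V -> R) :
  (forall z, 0 <= C z) -> (forall v w, 0 <= D v w) ->
  v_sep ends lenV lenE H C H%:R D <=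
  d_sep (ec_tl ends) (ec_hd ends) (ec_len lenV lenE) H (ec_lift C) H%:R (ec_demand D).
Proof.
move=> C0 D0; rewrite v_sep_symmetrize d_sep_mid => [|x y]; last exact: ec_demand_nmid.
apply: ler_sum => v _; apply: ler_sum => w _; rewrite /ec_demand /=.
apply: ler_if_asbool; first by rewrite divr_ge0 ?addr_ge0.
apply: ddist_gt_of_vdist_gt; first exact: v_cut_len_ge0.
by move=> f; rewrite d_cut_len_lift.
Qed.

Lemma v_expanding_of_ec_expanding (A : V -> R) h s phi :
  ec_expanding ends lenV capV lenE capE h s phi A ->
  v_expanding ends lenV capV lenE capE h s (phi / 3) A.
Proof.
move=> expE C HC D D0 DA Dh sep_pos.
have C0 := moving_cut_ge0 HC.
have sep_le := v_sep_le_d_sep (h * s) C0 D0.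
have lift_C0 : forall f, 0 <= ec_lift C f by case=> -[] *; apply: C0.
have cut_le := ler_ratio (d_cut_size_ge0 _ lift_C0) (d_cut_size_lift C0) sep_pos sep_le.
have := le_trans (expE _ (ec_lift_moving HC) _ (ec_demand_ge0 D0) (ec_demandC D)
  (ec_demand_respecting DA) (ec_demand_hlength Dh) (lt_le_trans sep_pos sep_le)) cut_le.
by rewrite ler_pdivrMr // [_ * 3]mulrC mulrA.
Qed.

End Transfer.

Theorem theorem4p5 (R : realFieldType) (V E : finType) (ends : E -> V * V)
  (lenV capV : V -> nat) (lenE capE : E -> nat)
  (hlenV : forall v, (0 < lenV v)%N) (hlenE : forall e, (0 < lenE e)%N)
  (hcapV : forall v, (0 < capV v)%N) (hcapE : forall e, (0 < capE e)%N)
  (A : V -> R) (hA : forall v, 0 <= A v)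
  (h s : nat) (hh : (0 < h)%N) (hs : (0 < s)%N) (phi : R) :
  (v_expanding ends lenV capV lenE capE h s phi A ->
     ec_expanding ends lenV capV lenE capE h s phi A) /\
  (ec_expanding ends lenV capV lenE capE h s phi A ->
     v_expanding ends lenV capV lenE capE h s (phi / 3) A).
Proof.
split; [exact: ec_expanding_of_v_expanding | exact: v_expanding_of_ec_expanding].
Qed.
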